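(* Let $(\Omega,\mathcal{F},(\mathcal{F}_t)_{t\in[0,T]})$ be a filtered space with a probability measure $Q$, let $\rho:[0,T]\to\mathbb{R}$ be a deterministic interest rate, and let $S_t^0=\exp\left(\int_0^t\rho(u)\,du\right)$ be the bond. Let $S_t^1>0$ be an asset whose discounted price $X_t^1=S_t^1/S_t^0$ is a strictly positive $Q$-martingale. For $t\in[0,T]$ let $Q_1'(t)$ be the probability measure with $Q_1'(t)\ll Q$ and $\frac{dQ_1'(t)}{dQ}=\frac{X_T^1}{X_t^1}$. For a strike $K>0$, put $c_t=K\exp\left(-\int_t^T\rho(u)\,du\right)$ and, for $x>0$, let $$\Phi_t\left(\tfrac{dQ_1'(t)}{dQ},x\right)=\mathbf{1}\left\{\tfrac{dQ_1'(t)}{dQ}>\tfrac{c_t}{x}\right\},$$ and let the $Q$-price at time $t$ of the European call $H_C$ with strike $K$, given $S_t^1=x$, be $$p_Q(H_C,x,t)=x\,E_{Q_1'(t)}\left(\Phi_t\left(\tfrac{dQ_1'(t)}{dQ},x\right)\right)-\exp\left(-\int_t^T\rho(u)\,du\right)K\,E_Q\left(\Phi_t\left(\tfrac{dQ_1'(t)}{dQ},x\right)\right).$$ Suppose that for all $t$ the distribution $\mathcal{L}\left(\frac{dQ_1'(t)}{dQ}\,\Big|\,Q\right)$ has a continuous Lebesgue density on $(0,\infty)$. Then for every $s_t^1>0$, $$\frac{d}{dx}p_Q(H_C,x,t)\Big|_{x=s_t^1}=E_{Q_1'(t)}\left(\Phi_t\left(\tfrac{dQ_1'(t)}{dQ},s_t^1\right)\right),$$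 i.e. the ``delta'' of the price process equals the $Q_1'(t)$-power of the test $\Phi_t$.
   Context: The displayed formula for $p_Q(H_C,x,t)$ is the representation of the $Q$-price process of the European call $H_C$ (payoff $(S_T^1-K)^+$) at time $t$ given $S_t^1=x$; $\Phi_t$ is viewed as a statistical (Neyman–Pearson) test of the null hypothesis $\{Q\}$ against the alternative $\{Q_1'(t)\}$, and $E_{Q_1'(t)}(\Phi_t)$ is its power. *)

From HB Require Import structures.
From mathcomp Require Import all_boot all_order all_algebra.
From mathcomp Require Import all_classical all_reals all_analysis.
Set Implicit Arguments. Unset Strict Implicit. Unset Printing Implicit Defensive.
Import Order.TTheory GRing.Theory Num.Theory.
Import numFieldNormedType.Exports.
Local Open Scope classical_set_scope.
Local Open Scope ring_scope.

Section defs.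
Context {R : realType} {d : measure_display} {Omega : measurableType d}.

Definition filtration (T : R) (F : R -> set (set Omega)) : Prop :=
  (forall t, 0 <= t <= T -> sigma_algebra setT (F t)) /\
  (forall t, 0 <= t <= T -> F t `<=` measurable) /\
  (forall s t, 0 <= s -> s <= t -> t <= T -> F s `<=` F t).

Definition martingale (Q : probability Omega R) (T : R)
    (F : R -> set (set Omega)) (X : R -> Omega -> R) : Prop :=
  (forall t, 0 <= t <= T -> forall B : set R, measurable B -> F t (X t @^-1` B)) /\
  (forall t, 0 <= t <= T -> Q.-integrable setT (fun w => (X t w)%:E)) /\
  (forall s t, 0 <= s -> s <= t -> t <= T -> forall A, F s A ->
     (\int[Q]_(w in A) (X t w)%:E = \int[Q]_(w in A) (X s w)%:E)%E).

Definition discount (rho : R -> R) (t T : R) : R :=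
  expR (- Rintegral lebesgue_measure `[t, T] rho).

Definition bond (rho : R -> R) (t : R) : R :=
  expR (Rintegral lebesgue_measure `[0, t] rho).

Definition NP_test (c x : R) (z : R) : R := \1_[set z' : R | c / x < z'] z.

(* p_Q(H_C, x, t) = x E_{Q1}(Phi_t(Z,x)) - disc * K * E_Q(Phi_t(Z,x)),
   with c = K * disc, Z = dQ1/dQ. *)
Definition call_price (Q Q1 : probability Omega R) (Z : Omega -> R)
    (K disc : R) (x : R) : R :=
  x * fine (\int[Q1]_w (NP_test (K * disc) x (Z w))%:E)
  - disc * K * fine (\int[Q]_w (NP_test (K * disc) x (Z w))%:E).

End defs.

From HB Require Import structures.
From mathcomp Require Import all_boot all_order all_algebra.
From mathcomp Require Import all_classical all_reals all_analysis.
From mathcomp Require Import measurable_realfun ring lra.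
Import Order.TTheory GRing.Theory Num.Theory.
Import Num.Def numFieldNormedType.Exports.
Local Open Scope classical_set_scope.
Local Open Scope ring_scope.

(* With c = K exp(-int_t^T rho) and Z = dQ1'(t)/dQ, the test is
   Phi_t(Z, x) = 1{x Z > c}, so p_Q(H_C, x, t) = E_Q[(x Z - c) Phi_t(Z, x)] and
   E_{Q1'(t)}(Phi_t(Z, x)) = E_Q[Z Phi_t(Z, x)].  The first-order error
   p(x + h) - p(x) - h E_Q[Z Phi_t(Z, x)]
     = E_Q[((x + h) Z - c) (Phi_t(Z, x + h) - Phi_t(Z, x))]
   lives on the event that Z lies between c/x and c/(x + h), where the integrand
   is at most |h| c/x.  A continuous density of the law of Z is bounded near c/x,
   so that event has probability O(|c/x - c/(x + h)|) = O(h) and the error is O(h^2). *)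

Lemma is_derive_quadratic_error {R : realType} {f : R -> R} {x l C e : R} :
  0 < e ->
  (forall h, h != 0 -> `|h| < e -> `|f (x + h) - f x - h * l| <= C * h ^+ 2) ->
  is_derive x 1 f l.
Proof.
move=> e0 err.
have quot : (fun h => h^-1 *: ((f \o shift x) (h *: 1) - f x)) @ 0^' --> l.
  apply/cvgrPdist_le => r r0; near=> h.
  have h0 : h != 0 by near: h; exact: nbhs_dnbhs_neq.
  have he : `|h| < e by near: h; exact: dnbhs0_lt.
  have hr : `|h| * (`|C| + 1) < r.
    rewrite -ltr_pdivlMr ?ltr_wpDl //; near: h; apply: dnbhs0_lt.
    by rewrite divr_gt0 ?ltr_wpDl.
  rewrite /= scaler1 [h + x]addrC.
  have -> : l - h^-1 *: (f (x + h) - f x) = - (h^-1 * (f (x + h) - f x - h * l)).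
    by rewrite -[_ *: _]/(_ * _); field.
  rewrite normrN normrM normfV ler_pdivrMl ?normr_gt0 //.
  apply: (le_trans (err h h0 he)).
  rewrite -[h ^+ 2]real_normK ?num_real // expr2.
  have := ler_norm C; have := normr_ge0 h; nra.
apply: DeriveDef; first exact: cvgP quot.
exact: cvg_lim quot.
Unshelve. all: by end_near.
Qed.

Lemma dist_div_le {R : realFieldType} {c x h : R} : 0 <= c -> 0 < x -> `|h| < x / 2 ->
  `|c / x - c / (x + h)| <= 2 * c / x ^+ 2 * `|h|.
Proof.
move=> c0 x0 hx.
have xh0 : 0 < x + h by move: hx; rewrite ltr_norml => /andP[? ?]; lra.
have -> : c / x - c / (x + h) = c * h / (x * (x + h)) by field; rewrite !gt_eqF.
rewrite !(normrM, normfV) (ger0_norm c0) (gtr0_norm x0) (gtr0_norm xh0).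
rewrite ler_pdivrMr ?mulr_gt0 //.
have [k k0 ->] : exists2 k, 0 <= k & c = k * x ^+ 2.
  exists (c / x ^+ 2); first by rewrite divr_ge0 // exprn_ge0 // ltW.
  by rewrite divfK // expf_neq0 // gt_eqF.
rewrite [2 * _]mulrA mulfK ?expf_neq0 ?gt_eqF // expr2.
have : x <= 2 * (x + h) by move: hx; rewrite ltr_norml => /andP[? ?]; lra.
move/(ler_wpM2l (mulr_ge0 (mulr_ge0 k0 (normr_ge0 h)) (ltW x0))); nra.
Qed.

Lemma NP_testE {R : realType} (c x z : R) : NP_test c x z = (c / x < z)%R%:R.
Proof.
rewrite /NP_test indicE.
have [zx|zx] := ltP (c / x) z; first by rewrite mem_set.
by rewrite memNset //; apply/negP; rewrite -leNgt.
Qed.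

Lemma NP_test_payoff_increment_le {R : realType} {c x h : R} (z : R) :
  0 < c -> 0 < x -> 0 < x + h ->
  `|((x + h) * z - c) * NP_test c (x + h) z - (x * z - c) * NP_test c x z
    - h * (z * NP_test c x z)|
  <= `|h| * (c / x) * \1_(`[minr (c / x) (c / (x + h)), maxr (c / x) (c / (x + h))]%classic) z.
Proof.
move=> c0 x0 xh0; rewrite !NP_testE indicE.
set u := c / x; set v := c / (x + h).
rewrite (_ : z \in _ = (minr u v <= z <= maxr u v)); last by rewrite mem_setE in_itv.
have u0 : 0 < u by rewrite divr_gt0 ?c_gt0.
have lin : (x + h) * z - c = (x + h) * (z - v).
  by rewrite /v; field; rewrite gt_eqF.
have hu : h * u = (x + h) * (u - v).
  by rewrite /u /v; field; rewrite !gt_eqF.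
have between : minr u v <= z <= maxr u v -> `|(x + h) * z - c| <= `|h| * u.
  have -> : `|h| * u = `|(x + h) * (u - v)| by rewrite -hu normrM (gtr0_norm u0).
  rewrite lin !normrM ler_pM2l ?normr_gt0 ?gt_eqF //.
  by case: (lerP u v) => [uv|vu] /andP[zl zr]; rewrite ler_norml; apply/andP; split; lra.
have -> : ((x + h) * z - c) * (v < z)%R%:R - (x * z - c) * (u < z)%R%:R
    - h * (z * (u < z)%R%:R) = ((x + h) * z - c) * ((v < z)%R%:R - (u < z)%R%:R).
  by ring.
have hu0 : 0 <= `|h| * u by rewrite mulr_ge0 // ltW.
have [vz|zv] := ltP v z; have [uz|zu] := ltP u z;
  rewrite ?subrr ?mulr0 ?normr0; try by rewrite mulr_ge0 ?ler0n.
- have zuv : minr u v <= z <= maxr u v by rewrite ge_min le_max (ltW vz) zu orbT.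
  by rewrite zuv subr0 !mulr1 (between zuv).
- have zuv : minr u v <= z <= maxr u v by rewrite ge_min le_max (ltW uz) zv orbT.
  by rewrite zuv sub0r mulrN1 normrN mulr1 (between zuv).
Qed.

Lemma continuous_density_itv_le {R : realType} {D : set R} {f : R -> R} {y : R} :
  open D -> D y -> (forall z, D z -> 0 <= f z) -> {within D, continuous f} ->
  exists M e : R, [/\ 0 <= M, 0 < e & forall a b, y - e < a -> a <= b -> b < y + e ->
    (\int[lebesgue_measure]_(z in `[a, b] `&` D) (f z)%:E <= (M * (b - a))%:E)%E].
Proof.
move=> oD Dy f0 cf.
have mD : measurable D := open_measurable oD.
move: cf; rewrite continuous_open_subspace // => cf.
have mf : measurable_fun D f by exact: open_continuous_measurable_fun.
move: (cf y (mem_set Dy)) => /cvgrPdist_lt /(_ 1 ltr01) /nbhs_ballP [e e0 near_y].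
exists (f y + 1), e; split => [|//|a b ya ab yb]; first by rewrite addr_ge0 ?f0.
have mab : measurable (`[a, b] `&` D) by apply: measurableI => //; exact: measurable_itv.
apply: (@le_trans _ _ (\int[lebesgue_measure]_(z in `[a, b] `&` D) (f y + 1)%:E)%E).
  apply: ge0_le_integral => //.
  - by move=> z [_ /f0]; rewrite lee_fin.
  - by apply/measurable_EFinP; apply: measurable_funS mf => //; exact: subIsetr.
  - move=> z [/= zab _]; rewrite lee_fin.
    have : ball y e z.
      move: zab; rewrite in_itv /= => /andP[az zb].
      by rewrite /ball /= ltr_norml; apply/andP; split; lra.
    by move/near_y; rewrite /= ltr_norml => /andP[+ _]; lra.
rewrite integral_cst // EFinM lee_wpmul2l ?lee_fin ?addr_ge0 ?f0 //.
apply: le_trans; first by apply: measureIl => //; exact: measurable_itv.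
have := lebesgue_measure_itv `[a, b]; rewrite /= lte_fin => ->.
by case: ltP => _; rewrite ?EFinB // lee_fin subr_ge0.
Qed.

Section integrable_EFin.
Context {R : realType} {d : measure_display} {T : measurableType d}.
Context {mu : {measure set T -> \bar R}} {D : set T}.
Hypothesis mD : measurable D.

Lemma integrableZl_EFin (k : R) {f : T -> R} : mu.-integrable D (EFin \o f) ->
  mu.-integrable D (EFin \o (fun w => k * f w)).
Proof.
by move=> /(integrableZl mD k); apply: eq_integrable.
Qed.

Lemma integrableB_EFin {f g : T -> R} : mu.-integrable D (EFin \o f) ->
  mu.-integrable D (EFin \o g) -> mu.-integrable D (EFin \o (fun w => f w - g w)).
Proof.
by move=> fi gi; apply: eq_integrable (integrableB mD fi gi).
Qed.

End integrable_EFin.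

Lemma measurable_fun_divr_gt0 {R : realType} {d : measure_display} {T : measurableType d}
    {f g : T -> R} :
  measurable_fun setT f -> measurable_fun setT g -> (forall w, 0 < g w) ->
  measurable_fun setT (fun w => f w / g w).
Proof.
move=> mf mg g0.
(* on positive values 1/g = expR (- ln g), a composition of measurable maps *)
have -> : (fun w => f w / g w) = f \* (fun w => expR (- ln (g w))).
  by apply/funext => w; rewrite /= expRN lnK // posrE.
apply: measurable_funM => //; apply: measurableT_comp; first exact: measurable_expR.
by apply: measurable_funN; apply: measurableT_comp; first exact: measurable_ln.
Qed.

Lemma martingale_measurable {R : realType} {d : measure_display} {Omega : measurableType d}
    {Q : probability Omega R} {T : R} {F : R -> set (set Omega)} {X : R -> Omega -> R}
    {t : R} :
  filtration T F -> martingale Q T F X -> 0 <= t <= T -> measurable_fun setT (X t).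
Proof.
by move=> [_ [FT _]] [adapted _] tT _ B mB; rewrite setTI; exact/FT/adapted.
Qed.

Section call_price_delta.
Context {R : realType} {d : measure_display} {Omega : measurableType d}.
Context {Q Q1 : probability Omega R} {Z : Omega -> R} {K disc : R}.
Hypotheses (mZ : measurable_fun setT Z) (Z_gt0 : forall w, 0 < Z w).
Hypothesis dQ1 : forall A, measurable A -> Q1 A = (\int[Q]_(w in A) (Z w)%:E)%E.
Hypotheses (K_gt0 : 0 < K) (disc_gt0 : 0 < disc).

Let c := K * disc.
Let c_gt0 : 0 < c. Proof. exact: mulr_gt0. Qed.

Let exercise x : set Omega := Z @^-1` [set z | c / x < z].

Let measurable_exercise x : measurable (exercise x).
Proof.
by rewrite -[exercise x]setTI; apply: mZ => //; rewrite -set_itvoy; exact: measurable_itv.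
Qed.

Let measurable_Z_itv a b : measurable (Z @^-1` `[a, b]).
Proof. by rewrite -[_ @^-1` _]setTI; apply: mZ => //; exact: measurable_itv. Qed.

Let NP_test_exercise x : (fun w => NP_test c x (Z w)) = \1_(exercise x).
Proof. by []. Qed.

Let measurable_NP_test x : measurable_fun setT (fun w => NP_test c x (Z w)).
Proof. by rewrite NP_test_exercise; exact: measurable_indic. Qed.

Lemma integrable_dQ1dQ : Q.-integrable setT (EFin \o Z).
Proof.
apply/integrableP; split; first exact/measurable_EFinP.
under eq_integral do rewrite /= gtr0_norm //.
by rewrite -dQ1 // probability_setT ltry.
Qed.

Lemma integrable_NP_test x : Q.-integrable setT (EFin \o (fun w => NP_test c x (Z w))).
Proof. by rewrite NP_test_exercise; exact: integrable_indic. Qed.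

Lemma integrable_Z_NP_test x :
  Q.-integrable setT (EFin \o (fun w => Z w * NP_test c x (Z w))).
Proof.
apply: le_integrable integrable_dQ1dQ => //.
  by apply/measurable_EFinP; exact: measurable_funM.
move=> w _; rewrite /= lee_fin normrM (gtr0_norm (Z_gt0 w)).
apply: ler_piMr; first exact: ltW.
by rewrite NP_testE; case: (c / x < Z w)%R; rewrite ?normr0 ?normr1.
Qed.

Lemma Q1_NP_test x :
  fine (\int[Q1]_w (NP_test c x (Z w))%:E) = \int[Q]_w (Z w * NP_test c x (Z w)).
Proof.
have -> : (fun w => (NP_test c x (Z w))%:E) = (fun w => (\1_(exercise x) w)%:E) by [].
rewrite integral_indic // setIT /Rintegral; congr fine.
transitivity (\int[Q]_(w in exercise x) (Z w)%:E)%E; first exact: dQ1.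
rewrite [LHS]integral_mkcond; apply: eq_integral => w _.
rewrite patchE -[NP_test c x (Z w)]/(\1_(exercise x) w) indicE.
by case: (w \in exercise x); rewrite ?mulr1 ?mulr0.
Qed.

Let payoff x w := (x * Z w - c) * NP_test c x (Z w).

Let integrable_payoff x : Q.-integrable setT (EFin \o payoff x).
Proof.
move: (integrableB_EFin measurableT
  (integrableZl_EFin measurableT x (integrable_Z_NP_test x))
  (integrableZl_EFin measurableT c (integrable_NP_test x))).
apply: eq_integrable => // w _.
by rewrite /payoff /=; congr EFin; ring.
Qed.

Let call_priceE x : call_price Q Q1 Z K disc x = \int[Q]_w payoff x w.
Proof.
rewrite /call_price Q1_NP_test (mulrC disc) -/c.
rewrite -[fine _]/(\int[Q]_w NP_test c x (Z w)).
rewrite -RintegralZl ?integrable_Z_NP_test // -RintegralZl ?integrable_NP_test //.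
rewrite -RintegralB ?integrableZl_EFin ?integrable_Z_NP_test ?integrable_NP_test //.
by apply: eq_Rintegral => w _; rewrite /payoff; ring.
Qed.

Lemma call_price_increment_le x h : 0 < x -> 0 < x + h ->
  `|call_price Q Q1 Z K disc (x + h) - call_price Q Q1 Z K disc x
    - h * \int[Q]_w (Z w * NP_test c x (Z w))|
  <= `|h| * (c / x) *
     fine (Q (Z @^-1` `[minr (c / x) (c / (x + h)), maxr (c / x) (c / (x + h))])).
Proof.
move=> x0 xh0; set J := Z @^-1` _; have mJ : measurable J := measurable_Z_itv _ _.
have iL := integrableZl_EFin measurableT h (integrable_Z_NP_test x).
have iD := integrableB_EFin measurableT (integrable_payoff (x + h)) (integrable_payoff x).
rewrite !call_priceE -RintegralZl ?integrable_Z_NP_test //.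
rewrite -RintegralB ?integrable_payoff // -RintegralB //.
apply: le_trans (le_normr_Rintegral _ _) _ => //; first exact: integrableB_EFin.
apply: (@le_trans _ _ (\int[Q]_w (`|h| * (c / x) * \1_J w))).
  apply: le_Rintegral => //.
  - exact/integrable_norm/integrableB_EFin.
  - exact/integrableZl_EFin/integrable_indic.
  - move=> w _; rewrite /payoff.
    exact: (NP_test_payoff_increment_le (Z w) c_gt0 x0 xh0).
by rewrite RintegralZl ?integrable_indic // /Rintegral integral_indic // setIT.
Qed.

Lemma is_derive_call_price {f : R -> R} {s : R} : 0 < s ->
  (forall z, 0 < z -> 0 <= f z) -> {within [set z : R | 0 < z], continuous f} ->
  (forall B : set R, measurable B -> Q (Z @^-1` B) =
     (\int[lebesgue_measure]_(z in B `&` [set z : R | (0 < z)%R]) (f z)%:E)%E) ->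
  is_derive s 1 (call_price Q Q1 Z K disc)
    (fine (\int[Q1]_w (NP_test (K * disc) s (Z w))%:E)).
Proof.
move=> s0 f0 cf lawZ; rewrite -/c Q1_NP_test.
set u := c / s.
have u0 : 0 < u by rewrite divr_gt0 ?c_gt0.
have oD : open [set z : R | 0 < z] by rewrite -set_itvoy; exact: interval_open.
have [M [e [M0 e0 massM]]] := continuous_density_itv_le oD u0 f0 cf.
set k := 2 * c / s ^+ 2.
have k0 : 0 < k by rewrite divr_gt0 ?mulr_gt0 ?exprn_gt0 ?c_gt0.
apply: (@is_derive_quadratic_error _ _ _ _ (u * M * k) (minr (s / 2) (e / k))).
  by rewrite lt_min (divr_gt0 e0 k0) andbT divr_gt0.
move=> h h0; rewrite lt_min => /andP[hs hek].
have sh0 : 0 < s + h by move: hs; rewrite ltr_norml => /andP[? ?]; lra.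
set v := c / (s + h).
have uv : `|u - v| <= k * `|h| := dist_div_le (ltW c_gt0) s0 hs.
have uve : `|u - v| < e by move: hek; rewrite ltr_pdivlMr // mulrC; lra.
apply: le_trans (call_price_increment_le _ _ s0 sh0) _; rewrite -/u -/v.
have [ya ab yb ba] : [/\ u - e < minr u v, minr u v <= maxr u v,
    maxr u v < u + e & maxr u v - minr u v = `|u - v|].
  by case: (lerP u v) uve => uv' uve'; split; lra.
have mass : fine (Q (Z @^-1` `[minr u v, maxr u v])) <= M * `|u - v|.
  rewrite -ba -lee_fin fineK ?fin_num_measure //.
  by move: (massM _ _ ya ab yb); rewrite -lawZ //; exact: measurable_itv.
rewrite -[h ^+ 2]real_normK ?num_real //.
rewrite (_ : u * M * k * _ = `|h| * u * (M * (k * `|h|))); last by ring.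
apply: ler_wpM2l; first by rewrite mulr_ge0 // ltW.
by apply: le_trans mass _; exact: ler_wpM2l.
Qed.

End call_price_delta.

Theorem theorem1 (R : realType) (d : measure_display) (Omega : measurableType d)
  (Q : probability Omega R) (T : R) (F : R -> set (set Omega))
  (rho : R -> R) (S1 : R -> Omega -> R) (Q1 : R -> probability Omega R) (K : R) :
  0 < T ->
  filtration T F ->
  lebesgue_measure.-integrable `[0, T] (fun u => (rho u)%:E) ->
  (forall t w, 0 <= t <= T -> 0 < S1 t w) ->
  (* the discounted price X^1_t = S^1_t / S^0_t is a strictly positive Q-martingale *)
  martingale Q T F (fun t w => S1 t w / bond rho t) ->
  (* dQ1'(t)/dQ = X^1_T / X^1_t *)
  (forall t, 0 <= t <= T -> forall A, measurable A ->
     Q1 t A = (\int[Q]_(w in A)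
        ((S1 T w / bond rho T) / (S1 t w / bond rho t))%:E)%E) ->
  0 < K ->
  (* the Q-law of dQ1'(t)/dQ has a continuous Lebesgue density on (0,oo) *)
  (forall t, 0 <= t < T -> exists f : R -> R,
     (forall z, 0 < z -> 0 <= f z) /\
     {within [set z : R | 0 < z], continuous f} /\
     forall B : set R, measurable B ->
       Q ((fun w => (S1 T w / bond rho T) / (S1 t w / bond rho t)) @^-1` B)
       = (\int[lebesgue_measure]_(z in B `&` [set z : R | (0 < z)%R]) (f z)%:E)%E) ->
  forall t, 0 <= t < T -> forall s : R, 0 < s ->
    let Z := fun w => (S1 T w / bond rho T) / (S1 t w / bond rho t) in
    is_derive s 1
      (call_price Q (Q1 t) Z K (discount rho t T))
      (fine (\int[Q1 t]_w (NP_test (K * discount rho t T) s (Z w))%:E)%E).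
Proof.
move=> T0 filt _ S1_gt0 mart dQ1 K0 law t tT s s0 Z.
have tT' : 0 <= t <= T by case/andP: tT => -> /ltW.
have TT : 0 <= T <= T by rewrite ltW //= lexx.
have X_gt0 u w : 0 <= u <= T -> 0 < S1 u w / bond rho u.
  by move=> uT; rewrite divr_gt0 ?S1_gt0 ?expR_gt0.
have mZ : measurable_fun setT Z.
  apply: measurable_fun_divr_gt0 => [||w]; last exact: X_gt0.
  - exact: martingale_measurable filt mart TT.
  - exact: martingale_measurable filt mart tT'.
have [f [f0 [cf lawZ]]] := law t tT.
apply: (is_derive_call_price mZ _ (dQ1 t tT') K0 (expR_gt0 _) s0 f0 cf lawZ).
by move=> w; rewrite divr_gt0 ?X_gt0.
Qed.
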